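(* Let $n\ge3$ and let $M$ be a polytope in $\mathbb{R}^n$ with $rB\subseteq M\subseteq RB$ for some $r,R>0$. Then for every pair of neighboring facets $F\sim F'$, $$\tan\Big(\frac{l_{F,F'}}2\Big)\le\frac Rr,\qquad\text{and in particular}\qquad l_{F,F'}^2\le\pi^2\Big(1-\frac{r^2}{R^2+r^2}\Big).$$
   Context: $B$ is the unit ball. Facets $F,F'$ of $M$ are neighbors if $\dim(F\cap F')=n-2$; $n_F$ is the outer unit normal of $F$; $l_{F,F'}$ is the geodesic distance on $S^{n-1}$ between $n_F$ and $n_{F'}$ (i.e. $\cos l_{F,F'}=\langle n_F,n_{F'}\rangle$, $l_{F,F'}\in[0,\pi]$). *)

From HB Require Import structures.
From mathcomp Require Import all_boot all_order all_algebra.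
From mathcomp Require Import all_classical all_reals all_analysis.
Set Implicit Arguments. Unset Strict Implicit. Unset Printing Implicit Defensive.
Import Order.TTheory GRing.Theory Num.Theory.
Local Open Scope ring_scope.
Local Open Scope classical_set_scope.

Section PolytopeDefs.
Variables (R : realType) (n : nat).
Notation V := 'rV[R]_n.

Definition dotp (u v : V) : R := \sum_(i < n) u 0 i * v 0 i.
Definition enorm (u : V) : R := Num.sqrt (dotp u u).

Definition cball (r : R) : set V := [set x | enorm x <= r].

Definition conv_hull (k : nat) (p : 'I_k -> V) : set V :=
  [set x | exists lam : 'I_k -> R,
      (forall i, 0 <= lam i) /\ \sum_(i < k) lam i = 1 /\
      x = \sum_(i < k) lam i *: p i].

Definition polytope (M : set V) : Prop :=
  exists (k : nat) (p : 'I_k -> V), M = conv_hull p.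

Definition has_aff_indep (S : set V) (k : nat) : Prop :=
  exists p : 'I_k.+1 -> V, (forall i, S (p i)) /\
    row_free (\matrix_(i < k) (p (lift ord0 i) - p ord0)).

Definition affdim (S : set V) (k : nat) : Prop :=
  has_aff_indep S k /\ ~ has_aff_indep S k.+1.

Definition facet_with_normal (M F : set V) (u : V) : Prop :=
  enorm u = 1 /\
  exists b : R, (forall x, M x -> dotp u x <= b) /\
    F = M `&` [set x | dotp u x = b] /\ affdim F (n.-1).

Definition is_facet (M F : set V) : Prop := exists u, facet_with_normal M F u.

Definition neighbors (M F F' : set V) : Prop :=
  is_facet M F /\ is_facet M F' /\ affdim (F `&` F') (n.-2).

Definition geod (u v : V) : R := acos (dotp u v).

End PolytopeDefs.

From HB Require Import structures.
From mathcomp Require Import all_boot all_order all_algebra.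
From mathcomp Require Import all_classical all_reals all_analysis.
From mathcomp Require Import ring lra.
Import Order.TTheory GRing.Theory Num.Theory numFieldNormedType.Exports.
Set Implicit Arguments. Unset Strict Implicit. Unset Printing Implicit Defensive.
Local Open Scope ring_scope.
Local Open Scope classical_set_scope.

(** A point x of F ∩ F' has |x| <= R, and since rB ⊆ M every supporting
    hyperplane of M lies at distance at least r from the origin, so
    <n_F, x> >= r and <n_F', x> >= r.  Hence
    2r <= <n_F + n_F', x> <= |n_F + n_F'| R = 2 cos(l/2) R, i.e.
    cos(l/2) >= r/R.  This gives tan(l/2) <= 1/cos(l/2) <= R/r.  For the
    second bound put φ = π/2 - l/2; then φ >= sin φ = cos(l/2) >= r/R, and
    l² = (π - 2φ)² <= π²/(1 + φ²) <= π²R²/(R² + r²). *)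

Section EuclideanDot.
Variables (R : realType) (n : nat).
Implicit Types a c x : 'rV[R]_n.

Lemma dotpC a x : dotp a x = dotp x a.
Proof. by apply: eq_bigr => i _; rewrite mulrC. Qed.

Lemma dotpDl a c x : dotp (a + c) x = dotp a x + dotp c x.
Proof. by rewrite /dotp -big_split; apply: eq_bigr => i _; rewrite !mxE mulrDl. Qed.

Lemma dotpZr a x (k : R) : dotp a (k *: x) = k * dotp a x.
Proof. by rewrite /dotp mulr_sumr; apply: eq_bigr => i _; rewrite mxE mulrCA. Qed.

Lemma dotpp_ge0 a : 0 <= dotp a a.
Proof. by apply: sumr_ge0 => i _; rewrite -expr2 sqr_ge0. Qed.

Lemma enorm_sqr a : enorm a ^+ 2 = dotp a a.
Proof. by rewrite sqr_sqrtr // dotpp_ge0. Qed.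

Lemma dotpDD a c : dotp (a + c) (a + c) = dotp a a + 2 * dotp a c + dotp c c.
Proof. by rewrite !dotpDl (dotpC a) (dotpC c) !dotpDl (dotpC c a); ring. Qed.

Lemma dotp_amgm a x s t :
  2 * s * t * dotp a x <= s ^+ 2 * dotp a a + t ^+ 2 * dotp x x.
Proof.
rewrite -subr_ge0 /dotp !mulr_sumr -big_split -sumrB /=.
apply: sumr_ge0 => i _.
have -> : s ^+ 2 * (a 0 i * a 0 i) + t ^+ 2 * (x 0 i * x 0 i) -
   2 * s * t * (a 0 i * x 0 i) = (s * a 0 i - t * x 0 i) ^+ 2 by ring.
exact: sqr_ge0.
Qed.

Lemma dotp_unit_itv a c : enorm a = 1 -> enorm c = 1 -> -1 <= dotp a c <= 1.
Proof.
move=> a1 c1; have := dotp_amgm a c 1 1; have := dotp_amgm a c 1 (-1).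
by rewrite -!enorm_sqr a1 c1; lra.
Qed.

Lemma scale_unit_in_cball a (r : R) : 0 <= r -> enorm a = 1 -> cball r (r *: a).
Proof.
move=> r0 a1; rewrite /cball /= /enorm dotpZr dotpC dotpZr -enorm_sqr a1.
by rewrite expr1n mulr1 -expr2 sqrtr_sqr ger0_norm.
Qed.

Lemma supporting_level_ge_radius (M : set 'rV[R]_n) a (r b : R) :
  0 <= r -> cball r `<=` M -> enorm a = 1 ->
  (forall x, M x -> dotp a x <= b) -> r <= b.
Proof.
move=> r0 rM a1 hb; have := hb _ (rM _ (scale_unit_in_cball r0 a1)).
by rewrite dotpZr -enorm_sqr a1 expr1n mulr1.
Qed.

(* dotp_amgm with weights Rad² and 2r, applied to a + c and x, whose inner
   product is at least 2r. *)
Lemma common_point_dotp_bound a c x (r Rad : R) :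
  0 <= r -> 0 < Rad -> enorm a = 1 -> enorm c = 1 -> enorm x <= Rad ->
  r <= dotp a x -> r <= dotp c x -> 2 * r ^+ 2 <= Rad ^+ 2 * (1 + dotp a c).
Proof.
move=> r0 Rad0 a1 c1 xR ax cx.
have xx : dotp x x <= Rad ^+ 2.
  by rewrite -enorm_sqr; have : 0 <= enorm x := sqrtr_ge0 _; nra.
have := dotp_amgm (a + c) x (Rad ^+ 2) (2 * r).
rewrite dotpDl dotpDD -!enorm_sqr a1 c1 expr1n enorm_sqr => h.
have R2 : 0 < Rad ^+ 2 by rewrite exprn_gt0.
have h1 : 8 * Rad ^+ 2 * r ^+ 2 <= 2 * Rad ^+ 2 * (2 * r) * (dotp a x + dotp c x).
  by have := mulr_ge0 (ltW R2) r0; nra.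
have h2 : (2 * r) ^+ 2 * dotp x x <= (2 * r) ^+ 2 * Rad ^+ 2.
  by rewrite ler_wpM2l // sqr_ge0.
nra.
Qed.

End EuclideanDot.

Section HalfAngleBounds.
Variable R : realType.
Implicit Types d p f r Rad t : R.

Lemma sin_le_id t : 0 <= t -> sin t <= t.
Proof.
move=> t0.
have hd y : y \in `]0, t[%R -> is_derive y 1 (@sin R) (cos y).
  by move=> _; exact: is_derive_sin.
have [|c _ h] := @MVT_segment R sin cos 0 t t0 hd.
  exact/continuous_subspaceT/continuous_sin.
move: h; rewrite sin0 !subr0 => ->; have := cos_le1 c; nra.
Qed.

Lemma half_acos_itv d : -1 <= d <= 1 -> 0 <= acos d / 2 <= pi / 2.
Proof.
move=> hd; have := acos_ge0 hd; have := acos_lepi hd.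
by move=> ? ?; apply/andP; split; lra.
Qed.

Lemma cos_half_acos_sqr d : -1 <= d <= 1 -> cos (acos d / 2) ^+ 2 = (1 + d) / 2.
Proof.
move=> hd; have := cos_mulr2n (acos d / 2).
rewrite mulr2n -splitr acosK ?in_itv //= => e.
by rewrite [in RHS]e mulr2n; field.
Qed.

Lemma cos_half_acos_ge d r Rad : -1 <= d <= 1 -> 0 <= r -> 0 <= Rad ->
  2 * r ^+ 2 <= Rad ^+ 2 * (1 + d) -> r <= Rad * cos (acos d / 2).
Proof.
move=> hd r0 Rad0 h.
have c0 : 0 <= cos (acos d / 2).
  by apply: cos_ge0_pihalf; have := half_acos_itv hd; have := pi_ge0 R; lra.
have := cos_half_acos_sqr hd; have : 0 <= Rad * cos (acos d / 2) by exact: mulr_ge0.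
nra.
Qed.

Lemma tan_le_of_cos_ge r Rad t : 0 < r -> 0 < Rad -> r <= Rad * cos t ->
  tan t <= Rad / r.
Proof.
move=> r0 Rad0 rc; have c0 : 0 < cos t by nra.
rewrite /tan ler_pdivrMr // mulrAC ler_pdivlMr //.
have := sin_le1 t; nra.
Qed.

(* With x = p - 2f, x(p - x) <= p²/4 < 4 gives x²(p - x)²/4 <= x(p - x),
   so the left side is at most x² + x(p - x) = xp <= p². *)
Lemma sqr_sub_double_bound p f : 0 <= f -> 2 * f <= p -> p < 4 ->
  (p - 2 * f) ^+ 2 * (1 + f ^+ 2) <= p ^+ 2.
Proof.
move=> f0 fp p4.
set x := p - 2 * f.
have x0 : 0 <= x by rewrite /x; lra.
have xp : x <= p by rewrite /x; lra.
have -> : f = (p - x) / 2 by rewrite /x; field.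
clearbody x.
have y0 : 0 <= x * (p - x) by rewrite mulr_ge0 // subr_ge0.
have y4 : x * (p - x) <= 4 by have := sqr_ge0 (x - p / 2); nra.
have -> : x ^+ 2 * (1 + ((p - x) / 2) ^+ 2) = x ^+ 2 + (x * (p - x)) ^+ 2 / 4.
  by field.
have : (x * (p - x)) ^+ 2 <= 4 * (x * (p - x)) by nra.
nra.
Qed.

Lemma sqr_double_le_of_cos_ge r Rad t : 0 <= t <= pi / 2 -> 0 < r -> 0 < Rad ->
  r <= Rad * cos t -> (2 * t) ^+ 2 <= pi ^+ 2 * (1 - r ^+ 2 / (Rad ^+ 2 + r ^+ 2)).
Proof.
move=> /andP[t0 tpi] r0 Rad0 rc.
set ph := pi / 2 - t.
have ph0 : 0 <= ph by rewrite /ph; lra.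
have sph : sin ph = cos t by rewrite /ph -opprB sinN sinBpihalf opprK.
have rph : r <= Rad * ph by have := sin_le_id ph0; rewrite sph; nra.
have pi4 : pi < 4 :> R by have := @pihalf_lt2 R; lra.
have hp2 : (pi - 2 * ph) ^+ 2 * (1 + ph ^+ 2) <= pi ^+ 2.
  by apply: sqr_sub_double_bound ph0 _ pi4; rewrite /ph; lra.
have -> : 2 * t = pi - 2 * ph by rewrite /ph; field.
have Rr : 0 < Rad ^+ 2 + r ^+ 2 by rewrite addr_gt0 ?exprn_gt0.
have -> : 1 - r ^+ 2 / (Rad ^+ 2 + r ^+ 2) = Rad ^+ 2 / (Rad ^+ 2 + r ^+ 2).
  by field; rewrite gt_eqF.
rewrite mulrA ler_pdivlMr //.
have r2 : r ^+ 2 <= Rad ^+ 2 * ph ^+ 2 by nra.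
have := sqr_ge0 (pi - 2 * ph); nra.
Qed.

End HalfAngleBounds.

Theorem lemma7p5 (R : realType) (n : nat) (hn : (3 <= n)%N)
  (M : set 'rV[R]_n) (r Rad : R) (hr : 0 < r) (hR : 0 < Rad)
  (hM : polytope M) (hrM : cball r `<=` M) (hMR : M `<=` cball Rad)
  (F F' : set 'rV[R]_n) (u u' : 'rV[R]_n)
  (hF : facet_with_normal M F u) (hF' : facet_with_normal M F' u')
  (hnb : neighbors M F F') :
  tan (geod u u' / 2) <= Rad / r /\
  geod u u' ^+ 2 <= pi ^+ 2 * (1 - r ^+ 2 / (Rad ^+ 2 + r ^+ 2)).
Proof.
case: hF => u1 [b [hb [eF _]]]; case: hF' => u'1 [b' [hb' [eF' _]]].
case: hnb => _ [_ [[p [hp _]] _]].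
have := hp ord0; rewrite eF eF' => -[[xM ub] [_ u'b']].
have r0 := ltW hr.
have ux : r <= dotp u (p ord0).
  by rewrite ub; exact: supporting_level_ge_radius hrM u1 hb.
have u'x : r <= dotp u' (p ord0).
  by rewrite u'b'; exact: supporting_level_ge_radius hrM u'1 hb'.
have hd := dotp_unit_itv u1 u'1.
have rc : r <= Rad * cos (geod u u' / 2).
  apply: (cos_half_acos_ge hd r0 (ltW hR)).
  exact: (common_point_dotp_bound r0 hR u1 u'1 (hMR _ xM) ux u'x).
split; first exact: tan_le_of_cos_ge.
have -> : geod u u' = 2 * (geod u u' / 2) by field.
exact: sqr_double_le_of_cos_ge (half_acos_itv hd) hr hR rc.
Qed.
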